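(* Let $\pi$ be uniformly distributed on $\mathrm{PF}_n$ and let $X$ be a Borel random variable, $P(X=m)=e^{-m}m^{m-1}/m!$ for $m=1,2,\dots$. For each fixed integer $j\ge 0$, $$P(\pi_1=n-j)\sim\frac{P(X\le j+1)}{n}\qquad(n\to\infty).$$ In particular $P(\pi_1=n)\sim 1/(en)$.
   Context: A parking function of length $n$ is a sequence $(\pi_1,\dots,\pi_n)$ with $1\le\pi_i\le n$ such that $\#\{t:\pi_t\le i\}\ge i$ for all $1\le i\le n$; $\mathrm{PF}_n$ denotes the set of these. $a_n\sim b_n$ means $a_n/b_n\to1$. *)

From Stdlib Require Import Reals Arith List Bool.
Import ListNotations.
Open Scope bool_scope.

Fixpoint all_seqs (n k : nat) : list (list nat) :=
  match k with
  | O => [ [] ]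
  | S k' => flat_map (fun x => map (fun s => x :: s) (all_seqs n k')) (seq 1 n)
  end.

Definition count_le (p : list nat) (i : nat) : nat :=
  length (filter (fun x => Nat.leb x i) p).

Definition is_pf (n : nat) (p : list nat) : Prop :=
  length p = n /\ (forall x, In x p -> (1 <= x <= n)%nat) /\
  (forall i, (1 <= i <= n)%nat -> (i <= count_le p i)%nat).

Definition is_pfb (n : nat) (p : list nat) : bool :=
  Nat.eqb (length p) n &&
  forallb (fun x => Nat.leb 1 x && Nat.leb x n) p &&
  forallb (fun i => Nat.leb i (count_le p i)) (seq 1 n).

(* PF_n as an explicit list (no duplicates, since all_seqs has none). *)
Definition PF (n : nat) : list (list nat) := filter (is_pfb n) (all_seqs n n).

Open Scope R_scope.
Definition prob_first (n v : nat) : R :=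
  INR (length (filter (fun p => Nat.eqb (hd 0%nat p) v) (PF n))) / INR (length (PF n)).

Definition borel_pmf (m : nat) : R :=
  exp (- INR m) * INR m ^ (m - 1) / INR (fact m).

Definition borel_cdf (k : nat) : R :=
  fold_right Rplus 0 (map borel_pmf (seq 1 k)).
Open Scope R_scope.

(* For [s] of length [n - 1], the word [v :: s] is a parking function iff [s] satisfies the
   parking inequalities with one extra car at [v].  Raising [v] by one loses exactly the [s]
   for which [v] is critical, i.e. only [v - 1] entries of [s] are at most [v]; such an [s] is a
   shuffle of a parking function of length [v - 1] and a shifted parking function of length
   [n - v], so there are [C(n-1, n-v) v^(v-2) (n-v+1)^(n-v-1)] of them.  These counts, and
   [|PF_n| = (n+1)^(n-1)], come from the number [a (a+k)^(k-1)] of parking words of length [k]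
   with [a - 1] extra cars preferring spot 1, which follows from Abel's identity after splitting
   off the entries equal to 1.  Hence [n P(pi_1 = n - j)] is a sum of [j + 1] explicit terms, the
   [m]-th of which tends to [e^(-m) m^(m-1) / m!]. *)

From Stdlib Require Import Reals Arith List Lia Bool Lra.
From Coquelicot Require Import Coquelicot.
From mathcomp Require binomial.
Import ListNotations.
Set Bullet Behavior "Strict Subproofs".

Open Scope nat_scope.

(** * Words and shuffles *)

Fixpoint words (A : list nat) (k : nat) : list (list nat) :=
  match k with
  | O => [ [] ]
  | S k' => flat_map (fun x => map (fun s => x :: s) (words A k')) A
  end.

Lemma all_seqs_words n k : all_seqs n k = words (seq 1 n) k.
Proof. induction k as [|k IHk]; simpl; [reflexivity | now rewrite IHk]. Qed.

Lemma in_words A k s : In s (words A k) -> length s = k /\ (forall x, In x s -> In x A).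
Proof.
  revert s; induction k as [|k IHk]; simpl; intros s Hs.
  - destruct Hs as [<-|[]]; split; [reflexivity | intros _ []].
  - apply in_flat_map in Hs as [x [Hx Hs]]. apply in_map_iff in Hs as [s' [<- Hs']].
    apply IHk in Hs' as [Hlen Hs']. simpl; split; [lia|]. intros y [<-|Hy]; auto.
Qed.

Lemma words_map f A k : words (map f A) k = map (map f) (words A k).
Proof.
  induction k as [|k IHk]; simpl; [reflexivity|].
  rewrite IHk, !flat_map_concat_map, map_map, concat_map, map_map.
  f_equal. apply map_ext. intros a. rewrite !map_map. reflexivity.
Qed.

Lemma words_singleton x k : words [x] k = [repeat x k].
Proof. induction k as [|k IHk]; simpl; [reflexivity | now rewrite IHk]. Qed.

Fixpoint lsum {A} (f : A -> nat) (l : list A) : nat :=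
  match l with [] => 0 | x :: l' => f x + lsum f l' end.

Lemma lsum_app {A} (f : A -> nat) l1 l2 : lsum f (l1 ++ l2) = lsum f l1 + lsum f l2.
Proof. induction l1; simpl; lia. Qed.

Lemma lsum_ext_in {A} (f g : A -> nat) l : (forall x, In x l -> f x = g x) -> lsum f l = lsum g l.
Proof. induction l; simpl; intros H; [reflexivity|]. rewrite H, IHl; auto. Qed.

Lemma lsum_add {A} (f g : A -> nat) l : lsum (fun x => f x + g x) l = lsum f l + lsum g l.
Proof. induction l; simpl; lia. Qed.

Lemma lsum_map {A B} (f : B -> nat) (g : A -> B) l : lsum f (map g l) = lsum (fun x => f (g x)) l.
Proof. induction l; simpl; auto. Qed.

Lemma lsum_flat_map {A B} (f : B -> nat) (g : A -> list B) l :
  lsum f (flat_map g l) = lsum (fun x => lsum f (g x)) l.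
Proof. induction l; simpl; [reflexivity|]. rewrite lsum_app; lia. Qed.

Lemma lsum_comm {A B} (f : A -> B -> nat) la lb :
  lsum (fun x => lsum (f x) lb) la = lsum (fun y => lsum (fun x => f x y) la) lb.
Proof.
  induction la; simpl.
  - induction lb; simpl; auto.
  - rewrite IHla, <- lsum_add. reflexivity.
Qed.

Lemma lsum_filter_negb {A} (f : A -> nat) (p : A -> bool) l :
  lsum f l = lsum f (filter p l) + lsum f (filter (fun x => negb (p x)) l).
Proof. induction l; simpl; [reflexivity|]. destruct (p a); simpl; lia. Qed.

Lemma filter_none {A} (p : A -> bool) l : (forall x, In x l -> p x = false) -> filter p l = [].
Proof. intros H. rewrite (filter_ext_in _ (fun _ => false)); [apply filter_false | exact H]. Qed.

Lemma filter_all {A} (p : A -> bool) l : (forall x, In x l -> p x = true) -> filter p l = l.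
Proof. intros H. now apply forallb_filter_id, forallb_forall. Qed.

Definition count_sat {A} (P : A -> bool) (l : list A) : nat := length (filter P l).

Lemma count_sat_ext_in {A} (P Q : A -> bool) l :
  (forall x, In x l -> P x = Q x) -> count_sat P l = count_sat Q l.
Proof. intros H. unfold count_sat. now rewrite (filter_ext_in _ _ _ H). Qed.

Lemma count_sat_map {A B} (P : B -> bool) (g : A -> B) l :
  count_sat P (map g l) = count_sat (fun x => P (g x)) l.
Proof.
  unfold count_sat. induction l as [|x l IHl]; simpl; [reflexivity|]. destruct (P (g x)); simpl; auto.
Qed.

Lemma count_sat_flat_map {A B} (P : B -> bool) (g : A -> list B) l :
  count_sat P (flat_map g l) = lsum (fun x => count_sat P (g x)) l.
Proof.
  unfold count_sat. induction l; simpl; [reflexivity|]. now rewrite filter_app, length_app, IHl.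
Qed.

Lemma count_sat_words_S P A k :
  count_sat P (words A (S k)) = lsum (fun x => count_sat (fun s => P (x :: s)) (words A k)) A.
Proof. simpl. rewrite count_sat_flat_map. apply lsum_ext_in. intros; apply count_sat_map. Qed.

Lemma count_sat_orb {A} (P Q R : A -> bool) l :
  (forall x, P x = Q x || R x) -> (forall x, Q x && R x = false) ->
  count_sat P l = count_sat Q l + count_sat R l.
Proof.
  intros HP HQR. unfold count_sat. induction l as [|x l IHl]; simpl; [reflexivity|].
  rewrite HP. specialize (HQR x). destruct (Q x), (R x); simpl in *; try discriminate; lia.
Qed.

Lemma count_sat_andb_const {A} (b : bool) (P : A -> bool) l :
  count_sat (fun x => b && P x) l = if b then count_sat P l else 0.
Proof. destruct b; [reflexivity|]. unfold count_sat. now rewrite filter_false. Qed.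

Lemma lsum_if_const {A} (P : A -> bool) K l :
  lsum (fun x => if P x then K else 0) l = count_sat P l * K.
Proof. unfold count_sat. induction l as [|x l IHl]; simpl; [reflexivity|]. destruct (P x); simpl; lia. Qed.

Section ShuffleSum.
Variables (T : Type) (add : T -> T -> T).

(* [shuffle_sum add k f] sums [f c d] over the [2^k] binary words of length [k],
   [c] and [d] being the numbers of zeros and ones; it is [sum_(c+d=k) C(k,c) f c d]. *)
Fixpoint shuffle_sum (k : nat) (f : nat -> nat -> T) : T :=
  match k with
  | O => f 0 0
  | S k' => add (shuffle_sum k' (fun c d => f (S c) d)) (shuffle_sum k' (fun c d => f c (S d)))
  end.

Lemma shuffle_sum_ext k f g :
  (forall c d, c + d = k -> f c d = g c d) -> shuffle_sum k f = shuffle_sum k g.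
Proof.
  revert f g; induction k as [|k IHk]; intros f g H; simpl.
  - now apply H.
  - f_equal; apply IHk; intros; apply H; lia.
Qed.

End ShuffleSum.
Arguments shuffle_sum {T} add k f.

Lemma shuffle_sum_lsum {A} k (f : A -> nat -> nat -> nat) l :
  shuffle_sum Nat.add k (fun c d => lsum (fun x => f x c d) l)
  = lsum (fun x => shuffle_sum Nat.add k (f x)) l.
Proof. revert f; induction k; intros f; simpl; [reflexivity|]. now rewrite !IHk, <- lsum_add. Qed.

Lemma shuffle_sum_indicator k d0 h :
  shuffle_sum Nat.add k (fun c d => if d =? d0 then h c else 0) = binomial.binomial k d0 * h (k - d0).
Proof.
  revert d0 h; induction k as [|k IHk]; intros d0 h; simpl.
  - destruct d0; simpl; lia.
  - pose proof (IHk d0 (fun c => h (S c))) as Hleft; cbv beta in Hleft. rewrite Hleft.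
    destruct d0 as [|d0].
    + rewrite (shuffle_sum_ext _ _ k _ (fun c d => if d =? 0 then 0 else 0))
        by (intros c [|d] _; reflexivity).
      rewrite (IHk 0 (fun _ => 0)), !binomial.bin0. simpl. rewrite Nat.sub_0_r. lia.
    + rewrite IHk, binomial.binS. unfold ssrnat.addn.
      destruct (le_lt_dec (S d0) k).
      * replace (S (k - S d0)) with (k - d0) by lia. lia.
      * rewrite (@binomial.bin_small k (S d0)) by (apply (ssrbool.introT ssrnat.ltP); lia).
        replace (k - d0) with 0 by lia. lia.
Qed.

Definition split_count (small : nat -> bool) A (P : list nat -> list nat -> bool) c d :=
  lsum (fun u => count_sat (P u) (words (filter (fun x => negb (small x)) A) d)) (words (filter small A) c).

(* A word over [A] is determined by its subword of [small] letters, its subword of other letters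
   and the set of positions of the [small] letters, over which [shuffle_sum] ranges. *)
Theorem count_words_split small A k : forall P,
  count_sat (fun s => P (filter small s) (filter (fun x => negb (small x)) s)) (words A k)
  = shuffle_sum Nat.add k (split_count small A P).
Proof.
  induction k as [|k IHk]; intros P.
  - unfold split_count, count_sat; simpl. now destruct (P [] []).
  - rewrite count_sat_words_S, (lsum_filter_negb _ small A). simpl shuffle_sum. f_equal.
    + rewrite (lsum_ext_in _
        (fun x => shuffle_sum Nat.add k (split_count small A (fun u w => P (x :: u) w)))).
      2:{ intros x Hx. apply filter_In in Hx as [_ Hx]. rewrite <- IHk.
          apply count_sat_ext_in. intros s _. simpl. now rewrite Hx. }
      rewrite <- shuffle_sum_lsum. apply shuffle_sum_ext. intros c d _.
      unfold split_count. simpl. rewrite lsum_flat_map. apply lsum_ext_in. intros x _. now rewrite lsum_map.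
    + rewrite (lsum_ext_in _
        (fun x => shuffle_sum Nat.add k (split_count small A (fun u w => P u (x :: w))))).
      2:{ intros x Hx. apply filter_In in Hx as [_ Hx]. rewrite <- IHk.
          apply count_sat_ext_in. intros s _. simpl. now destruct (small x). }
      rewrite <- shuffle_sum_lsum. apply shuffle_sum_ext. intros c d _.
      unfold split_count. rewrite lsum_comm. apply lsum_ext_in. intros u _. now rewrite count_sat_words_S.
Qed.

(** * Shifted parking functions *)

Lemma count_le_cons x s i : count_le (x :: s) i = (if x <=? i then 1 else 0) + count_le s i.
Proof. unfold count_le; simpl. now destruct (x <=? i). Qed.

Lemma count_le_app s t i : count_le (s ++ t) i = count_le s i + count_le t i.
Proof. unfold count_le. now rewrite filter_app, length_app. Qed.

Lemma count_le_filter_negb p s i :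
  count_le s i = count_le (filter p s) i + count_le (filter (fun x => negb (p x)) s) i.
Proof.
  induction s as [|x s IHs]; simpl; [reflexivity|].
  rewrite count_le_cons. destruct (p x); simpl; rewrite ?count_le_cons, IHs; lia.
Qed.

Lemma count_le_shift w s i : w <= i -> count_le (map (fun x => x + w) s) i = count_le s (i - w).
Proof.
  intros Hwi; induction s as [|x s IHs]; simpl; [reflexivity|]. rewrite !count_le_cons, IHs.
  destruct (Nat.leb_spec (x + w) i), (Nat.leb_spec x (i - w)); lia.
Qed.

Lemma count_le_all s i : (forall x, In x s -> x <= i) -> count_le s i = length s.
Proof.
  intros H. unfold count_le. rewrite filter_all; [reflexivity|]. intros x Hx. now apply Nat.leb_le, H.
Qed.

Lemma count_le_none s i : (forall x, In x s -> i < x) -> count_le s i = 0.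
Proof.
  intros H. unfold count_le. rewrite filter_none; [reflexivity|]. intros x Hx. apply Nat.leb_gt, H, Hx.
Qed.

Lemma count_le_repeat x c i : count_le (repeat x c) i = if x <=? i then c else 0.
Proof.
  induction c as [|c IHc]; simpl; [now destruct (x <=? i)|].
  rewrite count_le_cons, IHc. now destruct (x <=? i).
Qed.

Lemma map_add_seq w s len : map (fun x => x + w) (seq s len) = seq (s + w) len.
Proof. revert s; induction len as [|len IHlen]; intros s; simpl; [reflexivity | now rewrite IHlen]. Qed.

Lemma filter_seq_le w n : w <= n ->
  filter (fun x => x <=? w) (seq 1 n) = seq 1 w /\
  filter (fun x => negb (x <=? w)) (seq 1 n) = map (fun x => x + w) (seq 1 (n - w)).
Proof.
  intros Hwn. rewrite map_add_seq. replace n with (w + (n - w)) at 1 2 by lia.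
  rewrite seq_app, !filter_app, (filter_all _ (seq 1 w)), (filter_none _ (seq (1 + w) _)),
    (filter_none _ (seq 1 w)), (filter_all _ (seq (1 + w) _)), app_nil_r; [split; reflexivity | ..];
    intros x Hx; apply in_seq in Hx; [apply negb_true_iff | apply negb_false_iff | | ];
    solve [apply Nat.leb_le; lia | apply Nat.leb_gt; lia].
Qed.

Lemma forallb_seq f s len :
  forallb f (seq s len) = true <-> (forall i, s <= i < s + len -> f i = true).
Proof.
  rewrite forallb_forall. split; intros H i Hi; apply H; [apply in_seq; lia|]. apply in_seq in Hi; lia.
Qed.

Lemma forallb_ext {A} (f g : A -> bool) l : (forall x, f x = g x) -> forallb f l = forallb g l.
Proof. intros H; induction l as [|x l IHl]; simpl; [reflexivity|]. now rewrite H, IHl. Qed.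

(* [is_spf a k s]: the word [s] together with [a - 1] extra cars preferring spot 1 is a parking
   function, i.e. its [i]-th smallest entry is at most [a + i - 1]. *)
Definition is_spf (a k : nat) (s : list nat) : bool :=
  forallb (fun i => i <=? count_le s (a + i - 1)) (seq 1 k).

Definition spf_count (N a k : nat) : nat := count_sat (is_spf a k) (words (seq 1 N) k).

Lemma spf_count_no_shift N k : 1 <= k -> spf_count N 0 k = 0.
Proof.
  intros Hk. unfold spf_count, count_sat. rewrite filter_none; [reflexivity|].
  intros s Hs. apply in_words in Hs as [_ Hs]. apply not_true_is_false. unfold is_spf.
  rewrite forallb_seq. intros H. specialize (H 1 ltac:(lia)). apply Nat.leb_le in H.
  rewrite count_le_none in H; [lia|]. intros x Hx. apply Hs, in_seq in Hx. lia.
Qed.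

Lemma spf_count_remove_ones N a k : 1 <= a -> 1 <= N ->
  spf_count N a k = shuffle_sum Nat.add k (fun c d => spf_count (N - 1) (a + c - 1) d).
Proof.
  intros Ha HN. unfold spf_count.
  set (small := fun x => x <=? 1).
  set (P := fun u w => forallb (fun i => i <=? count_le u (a + i - 1) + count_le w (a + i - 1)) (seq 1 k)).
  rewrite (count_sat_ext_in _ (fun s => P (filter small s) (filter (fun x => negb (small x)) s))).
  2:{ intros s _. unfold is_spf, P. apply forallb_ext. intros i. now rewrite <- count_le_filter_negb. }
  rewrite count_words_split. apply shuffle_sum_ext. intros c d Hcd.
  unfold split_count. destruct (filter_seq_le 1 N HN) as [E1 E2]. unfold small. rewrite E1, E2.
  cbn [seq]. rewrite words_singleton. cbn [lsum]. rewrite Nat.add_0_r, words_map, count_sat_map.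
  apply count_sat_ext_in. intros z _.
  unfold P, is_spf. apply eq_iff_eq_true. rewrite !forallb_seq.
  split; intros H i Hi.
  - specialize (H (c + i) ltac:(lia)). apply Nat.leb_le in H. apply Nat.leb_le.
    rewrite count_le_repeat, count_le_shift, (proj2 (Nat.leb_le 1 _)) in H by lia.
    replace (a + c - 1 + i - 1) with (a + (c + i) - 1 - 1) by lia. lia.
  - apply Nat.leb_le. rewrite count_le_repeat, count_le_shift, (proj2 (Nat.leb_le 1 _)) by lia.
    destruct (le_lt_dec i c) as [Hic|Hic]; [lia|].
    specialize (H (i - c) ltac:(lia)). apply Nat.leb_le in H.
    replace (a + c - 1 + (i - c) - 1) with (a + i - 1 - 1) in H by lia. lia.
Qed.

Open Scope R_scope.

Lemma INR_shuffle_sum k f :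
  INR (shuffle_sum Nat.add k f) = shuffle_sum Rplus k (fun c d => INR (f c d)).
Proof. revert f; induction k; intros f; simpl; [reflexivity|]. now rewrite plus_INR, !IHk. Qed.

Lemma shuffle_sum_linear k f g (al be : R) :
  shuffle_sum Rplus k (fun c d => al * f c d + be * g c d)
  = al * shuffle_sum Rplus k f + be * shuffle_sum Rplus k g.
Proof.
  revert f g; induction k as [|k IHk]; intros f g; simpl; [reflexivity|].
  rewrite (IHk (fun c d => f (S c) d)), (IHk (fun c d => f c (S d))). ring.
Qed.

Lemma shuffle_sum_binomial k x y : shuffle_sum Rplus k (fun c d => x ^ c * y ^ d) = (x + y) ^ k.
Proof.
  revert x y. induction k as [|k IHk]; intros x y; simpl; [ring|].
  rewrite (shuffle_sum_ext _ _ k _ (fun c d => x * (x ^ c * y ^ d) + 0 * 0)) by (intros; simpl; ring).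
  rewrite (shuffle_sum_ext _ _ k (fun c d => x ^ c * y ^ S d) (fun c d => y * (x ^ c * y ^ d) + 0 * 0))
    by (intros; simpl; ring).
  rewrite !shuffle_sum_linear, IHk. ring.
Qed.

Lemma shuffle_sum_binomial_deriv k x y :
  shuffle_sum Rplus k (fun c d => INR d * x ^ c * y ^ (d - 1)) = INR k * (x + y) ^ (k - 1).
Proof.
  revert x y. induction k as [|k IHk]; intros x y; simpl; [ring|].
  rewrite (shuffle_sum_ext _ _ k _ (fun c d => x * (INR d * x ^ c * y ^ (d - 1)) + 0 * 0))
    by (intros; simpl; ring).
  rewrite (shuffle_sum_ext _ _ k (fun c d => INR (S d) * x ^ c * y ^ (S d - 1))
       (fun c d => y * (INR d * x ^ c * y ^ (d - 1)) + 1 * (x ^ c * y ^ d))).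
  2:{ intros c [|d] _; rewrite S_INR; simpl; [ring|]. rewrite Nat.sub_0_r. ring. }
  rewrite !shuffle_sum_linear, IHk, shuffle_sum_binomial.
  destruct k as [|k]; [simpl; ring|].
  replace (S k - 1)%nat with k by lia. rewrite Nat.sub_0_r. cbn [pow]. ring.
Qed.

Definition abel (a k : nat) : R :=
  match k with O => 1 | S k' => INR a * INR (a + k) ^ k' end.

(* Abel's identity, from [(x + y)^k] and its [y]-derivative at [x = 1], [y = a + k]. *)
Lemma shuffle_sum_abel a k : shuffle_sum Rplus k (fun c d => abel (a + c) d) = abel (a + 1) k.
Proof.
  set (M := INR (a + k)).
  rewrite (shuffle_sum_ext _ _ k _ (fun c d => 1 * (1 ^ c * M ^ d) + (-1) * (INR d * 1 ^ c * M ^ (d - 1)))).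
  2:{ intros c [|d] Hcd; rewrite !pow1; [simpl; ring|].
      unfold M. replace (a + k)%nat with (a + c + S d)%nat by lia.
      cbn [abel pow Nat.sub]. rewrite Nat.sub_0_r, !plus_INR, S_INR. ring. }
  rewrite shuffle_sum_linear, shuffle_sum_binomial, shuffle_sum_binomial_deriv.
  destruct k as [|k]; [simpl; ring|]. cbn [abel pow Nat.sub]. rewrite Nat.sub_0_r.
  replace (a + 1 + S k)%nat with (S (a + S k)) by lia. rewrite (S_INR (a + S k)). fold M.
  replace (1 + M) with (M + 1) by ring. set (Q := (M + 1) ^ k).
  unfold M. rewrite !plus_INR, S_INR, INR_1. ring.
Qed.

Theorem spf_count_abel k : forall N a,
  (1 <= a)%nat -> (a + k <= N + 1)%nat -> INR (spf_count N a k) = abel a k.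
Proof.
  induction k as [k IHk] using lt_wf_ind. destruct k as [|k']; [reflexivity|].
  intros N a. induction a as [|a IHa] in N |- *; intros Ha HaN; [lia|].
  rewrite spf_count_remove_ones, INR_shuffle_sum by lia.
  replace (S a) with (a + 1)%nat by lia. rewrite <- shuffle_sum_abel.
  apply shuffle_sum_ext. intros [|c] d Hcd.
  - replace d with (S k') by lia. replace (a + 1 + 0 - 1)%nat with a by lia. rewrite Nat.add_0_r.
    destruct a as [|a]; [rewrite spf_count_no_shift by lia; simpl; ring | apply IHa; lia].
  - replace (a + 1 + S c - 1)%nat with (a + S c)%nat by lia. apply IHk; lia.
Qed.

(** * The first entry of a parking function *)

Open Scope nat_scope.

Lemma count_sat_filter {A} (f g : A -> bool) l :
  count_sat f (filter g l) = count_sat (fun x => g x && f x) l.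
Proof.
  unfold count_sat. induction l as [|x l IHl]; simpl; [reflexivity|].
  destruct (g x); simpl; [destruct (f x); simpl|]; now rewrite ?IHl.
Qed.

Lemma lsum_indicator_seq v K s len : s <= v < s + len ->
  lsum (fun x => if x =? v then K else 0) (seq s len) = K.
Proof.
  revert s; induction len as [|len IHlen]; intros s Hv; [lia|]. simpl.
  destruct (Nat.eq_dec s v) as [<-|Hne].
  - rewrite Nat.eqb_refl, (lsum_ext_in _ (fun _ => 0)).
    + clear. enough (forall l, lsum (fun _ : nat => 0) l = 0) as -> by lia. induction l; auto.
    + intros x Hx. apply in_seq in Hx. rewrite (proj2 (Nat.eqb_neq x s)); [reflexivity | lia].
  - rewrite (proj2 (Nat.eqb_neq s v)), IHlen by lia. reflexivity.
Qed.

Lemma forallb_in_seq n s :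
  (forall x, In x s -> In x (seq 1 n)) -> forallb (fun x => (1 <=? x) && (x <=? n)) s = true.
Proof.
  intros Hs. apply forallb_forall. intros x Hx. apply Hs, in_seq in Hx.
  apply andb_true_iff; split; apply Nat.leb_le; lia.
Qed.

Lemma is_pfb_words n s : In s (words (seq 1 n) n) -> is_pfb n s = is_spf 1 n s.
Proof.
  intros Hs. apply in_words in Hs as [Hlen Hs]. unfold is_pfb.
  rewrite Hlen, Nat.eqb_refl, forallb_in_seq by exact Hs.
  apply forallb_ext. intros i. now replace (1 + i - 1) with i by lia.
Qed.

Lemma PF_length n : length (PF n) = spf_count n 1 n.
Proof. unfold PF, spf_count. rewrite all_seqs_words. apply count_sat_ext_in, is_pfb_words. Qed.

Definition park_with (n v : nat) (s : list nat) : bool :=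
  forallb (fun i => i <=? (if v <=? i then 1 else 0) + count_le s i) (seq 1 n).

(* Exactly [v] entries of [v :: s] are at most [v], so it splits into a parking function of
   length [v] and a shifted one of length [n - v]. *)
Definition park_tight (n v : nat) (s : list nat) : bool :=
  park_with n v s && (count_le s v =? v - 1).

Lemma count_first_park_with n v : 1 <= v <= n ->
  length (filter (fun p => hd 0 p =? v) (PF n)) = count_sat (park_with n v) (words (seq 1 n) (n - 1)).
Proof.
  intros Hv. destruct n as [|n]; [lia|]. unfold PF.
  fold (count_sat (fun p => hd 0 p =? v) (filter (is_pfb (S n)) (all_seqs (S n) (S n)))).
  rewrite count_sat_filter, all_seqs_words, count_sat_words_S.
  rewrite (lsum_ext_in _
    (fun x => if x =? v then count_sat (park_with (S n) v) (words (seq 1 (S n)) n) else 0)).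
  - rewrite lsum_indicator_seq by lia. now replace (S n - 1) with n by lia.
  - intros x Hx. simpl hd. destruct (x =? v) eqn:Exv.
    + apply Nat.eqb_eq in Exv as ->. apply count_sat_ext_in. intros s Hs.
      apply in_words in Hs as [Hlen Hs]. unfold is_pfb, park_with. cbn [length].
      rewrite Hlen, Nat.eqb_refl, andb_true_r, forallb_in_seq.
      * apply forallb_ext. intros i. now rewrite count_le_cons.
      * intros x [<-|Hx']; [apply in_seq; lia | auto].
    + unfold count_sat. rewrite filter_none; [reflexivity|]. intros s _. apply andb_false_r.
Qed.

Lemma park_with_step n v s : 1 <= v <= n ->
  park_with n v s = park_with n (S v) s || park_tight n v s.
Proof.
  intros Hv. unfold park_tight. apply eq_iff_eq_true.
  rewrite orb_true_iff, andb_true_iff, Nat.eqb_eq. unfold park_with. rewrite !forallb_seq. split.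
  - intros H. destruct (Nat.eq_dec (count_le s v) (v - 1)) as [E|E]; [right; split; auto|left].
    intros i Hi. specialize (H i Hi). apply Nat.leb_le in H. apply Nat.leb_le.
    destruct (Nat.eq_dec i v) as [->|Hne].
    + rewrite Nat.leb_refl in H. lia.
    + revert H; destruct (Nat.leb_spec v i), (Nat.leb_spec (S v) i); lia.
  - intros [H|[H _]]; auto. intros i Hi. specialize (H i Hi). apply Nat.leb_le in H. apply Nat.leb_le.
    revert H; destruct (Nat.leb_spec v i), (Nat.leb_spec (S v) i); lia.
Qed.

Lemma park_with_succ_not_tight n v s : 1 <= v <= n ->
  park_with n (S v) s && park_tight n v s = false.
Proof.
  intros Hv. unfold park_tight. destruct (park_with n (S v) s) eqn:E; [|reflexivity].
  destruct (park_with n v s); simpl; [|reflexivity]. apply Nat.eqb_neq.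
  unfold park_with in E. rewrite forallb_seq in E. specialize (E v ltac:(lia)).
  apply Nat.leb_le in E. rewrite (proj2 (Nat.leb_gt (S v) v)) in E by lia. lia.
Qed.

Lemma count_park_with_top n : 1 <= n ->
  count_sat (park_with n n) (words (seq 1 n) (n - 1)) = spf_count n 1 (n - 1).
Proof.
  intros Hn. apply count_sat_ext_in. intros s Hs. apply in_words in Hs as [Hlen Hs].
  unfold park_with, is_spf. apply eq_iff_eq_true. rewrite !forallb_seq. split; intros H i Hi.
  - specialize (H i ltac:(lia)). apply Nat.leb_le in H. apply Nat.leb_le.
    rewrite (proj2 (Nat.leb_gt n i)) in H by lia. replace (1 + i - 1) with i by lia. lia.
  - apply Nat.leb_le. destruct (Nat.eq_dec i n) as [->|Hne].
    + rewrite Nat.leb_refl, count_le_all; [lia|]. intros x Hx. apply Hs, in_seq in Hx. lia.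
    + specialize (H i ltac:(lia)). apply Nat.leb_le in H. replace (1 + i - 1) with i in H by lia. lia.
Qed.

Lemma park_tight_count_le_ext n v s t :
  (forall i, count_le s i = count_le t i) -> park_tight n v s = park_tight n v t.
Proof.
  intros H. unfold park_tight, park_with. rewrite H. f_equal. apply forallb_ext. intros i. now rewrite H.
Qed.

Lemma park_tight_app n w c d u z :
  1 <= w < n -> c + d = n - 1 ->
  length u = c -> (forall x, In x u -> 1 <= x <= w) ->
  length z = d -> (forall x, In x z -> 1 <= x <= n - w) ->
  park_tight n w (u ++ map (fun x => x + w) z) = (c =? w - 1) && is_spf 1 c u && is_spf 1 d z.
Proof.
  intros Hw Hcd Lu Hu Lz Hz.
  set (z' := map (fun x => x + w) z).
  assert (Fu : forall i, w <= i -> count_le u i = c).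
  { intros i Hi. rewrite count_le_all; auto. intros x Hx. apply Hu in Hx. lia. }
  assert (Fz_low : forall i, i <= w -> count_le z' i = 0).
  { intros i Hi. apply count_le_none. intros x Hx.
    apply in_map_iff in Hx as [y [<- Hy]]. apply Hz in Hy. lia. }
  assert (Fz_high : forall i, w <= i -> count_le z' i = count_le z (i - w)).
  { intros i Hi. now apply count_le_shift. }
  unfold park_tight, park_with, is_spf. rewrite count_le_app.
  rewrite (forallb_ext _ (fun i => i <=? (if w <=? i then 1 else 0) + (count_le u i + count_le z' i)))
    by (intros; now rewrite count_le_app).
  apply eq_iff_eq_true. rewrite !andb_true_iff, !Nat.eqb_eq, !forallb_seq. split.
  - intros [HC HE]. rewrite Fu, Fz_low in HE by lia. split; [split; [lia|]|].
    + intros i Hi. specialize (HC i ltac:(lia)). apply Nat.leb_le in HC. apply Nat.leb_le.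
      rewrite (proj2 (Nat.leb_gt w i)), Fz_low in HC by lia. replace (1 + i - 1) with i by lia. lia.
    + intros t Ht. specialize (HC (w + t) ltac:(lia)). apply Nat.leb_le in HC. apply Nat.leb_le.
      rewrite (proj2 (Nat.leb_le w (w + t))), Fu, Fz_high in HC by lia.
      replace (w + t - w) with t in HC by lia. replace (1 + t - 1) with t by lia. lia.
  - intros [[Hc Gu] Gz]. split.
    + intros i Hi. apply Nat.leb_le. destruct (lt_eq_lt_dec i w) as [[Hlt|Heq]|Hgt]; [| subst i |].
      * specialize (Gu i ltac:(lia)). apply Nat.leb_le in Gu.
        rewrite (proj2 (Nat.leb_gt w i)), Fz_low by lia. replace (1 + i - 1) with i in Gu by lia. lia.
      * rewrite Nat.leb_refl, Fu, Fz_low by lia. lia.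
      * specialize (Gz (i - w) ltac:(lia)). apply Nat.leb_le in Gz.
        rewrite (proj2 (Nat.leb_le w i)), Fu, Fz_high by lia.
        replace (1 + (i - w) - 1) with (i - w) in Gz by lia. lia.
    + rewrite Fu, Fz_low by lia. lia.
Qed.

Lemma count_park_tight n w : 1 <= w < n ->
  count_sat (park_tight n w) (words (seq 1 n) (n - 1))
  = binomial.binomial (n - 1) (n - w) * (spf_count w 1 (w - 1) * spf_count (n - w) 1 (n - w)).
Proof.
  intros Hw. set (small := fun x => x <=? w).
  rewrite (count_sat_ext_in _
    (fun s => park_tight n w (filter small s ++ filter (fun x => negb (small x)) s))).
  2:{ intros s _. apply park_tight_count_le_ext. intros i.
      now rewrite count_le_app, <- count_le_filter_negb. }
  rewrite (count_words_split small _ _ (fun u z => park_tight n w (u ++ z))).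
  rewrite (shuffle_sum_ext _ _ _ _
    (fun c d => if d =? n - w then spf_count w 1 c * spf_count (n - w) 1 (n - w) else 0)).
  - rewrite shuffle_sum_indicator. now replace (n - 1 - (n - w)) with (w - 1) by lia.
  - intros c d Hcd. unfold split_count. destruct (filter_seq_le w n ltac:(lia)) as [E1 E2].
    unfold small. rewrite E1, E2, words_map.
    rewrite (lsum_ext_in _ (fun u => if (d =? n - w) && is_spf 1 c u then spf_count (n - w) 1 d else 0)).
    + rewrite lsum_if_const, count_sat_andb_const. now destruct (Nat.eqb_spec d (n - w)) as [->|].
    + intros u Hu. apply in_words in Hu as [Lu Hu].
      unfold spf_count. rewrite count_sat_map, <- count_sat_andb_const. apply count_sat_ext_in.
      intros z Hz. apply in_words in Hz as [Lz Hz].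
      rewrite park_tight_app with (c := c) (d := d); auto.
      * replace (c =? w - 1) with (d =? n - w); [reflexivity|].
        apply eq_iff_eq_true. rewrite !Nat.eqb_eq. lia.
      * intros x Hx. apply Hu, in_seq in Hx. lia.
      * intros x Hx. apply Hz, in_seq in Hx. lia.
Qed.

Open Scope R_scope.

Definition tight_term (n m : nat) : R :=
  INR (binomial.binomial (n - 1) (m - 1)) * abel 1 (n - m) * abel 1 (m - 1).

Definition head_count (n j : nat) : R := fold_right Rplus 0 (map (tight_term n) (seq 1 (j + 1))).

Lemma fold_right_Rplus_snoc l x : fold_right Rplus 0 (l ++ [x]) = fold_right Rplus 0 l + x.
Proof. induction l as [|y l IHl]; simpl; [ring | rewrite IHl; ring]. Qed.

Lemma head_count_S n j : head_count n (S j) = head_count n j + tight_term n (j + 2).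
Proof.
  unfold head_count. replace (S j + 1)%nat with (S (j + 1)) by lia.
  rewrite seq_S, map_app. cbn [map]. rewrite fold_right_Rplus_snoc.
  now replace (1 + (j + 1))%nat with (j + 2)%nat by lia.
Qed.

Lemma INR_count_park_with n j : (j + 1 <= n)%nat ->
  INR (count_sat (park_with n (n - j)) (words (seq 1 n) (n - 1))) = head_count n j.
Proof.
  induction j as [|j IHj]; intros Hjn.
  - rewrite Nat.sub_0_r, count_park_with_top, spf_count_abel by lia.
    unfold head_count, tight_term. cbn [seq map fold_right Nat.add Nat.sub].
    rewrite binomial.bin0. simpl. ring.
  - rewrite (count_sat_orb _ _ _ _ (fun s => park_with_step n (n - S j) s ltac:(lia))
      (fun s => park_with_succ_not_tight n (n - S j) s ltac:(lia))).
    replace (S (n - S j)) with (n - j)%nat by lia.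
    rewrite plus_INR, IHj, count_park_tight, head_count_S by lia. f_equal.
    replace (n - (n - S j))%nat with (j + 1)%nat by lia.
    rewrite !mult_INR, !spf_count_abel by lia. unfold tight_term.
    replace (j + 2 - 1)%nat with (j + 1)%nat by lia.
    replace (n - (j + 2))%nat with (n - S j - 1)%nat by lia. ring.
Qed.

Lemma prob_first_head_count n j : (j + 1 <= n)%nat -> prob_first n (n - j) = head_count n j / abel 1 n.
Proof.
  intros Hjn. unfold prob_first.
  rewrite count_first_park_with, INR_count_park_with, PF_length, spf_count_abel by lia. reflexivity.
Qed.

(** * Asymptotics *)

Lemma is_lim_seq_inv_succ : is_lim_seq (fun n => / INR (n + 1)) 0.
Proof.
  replace (Finite 0) with (Rbar_inv p_infty) by reflexivity.
  apply is_lim_seq_inv; [|discriminate]. apply (is_lim_seq_incr_n INR 1), is_lim_seq_INR.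
Qed.

Lemma is_lim_seq_pow_nat (u : nat -> R) (l : R) k :
  is_lim_seq u l -> is_lim_seq (fun n => u n ^ k) (l ^ k).
Proof.
  intros Hu; induction k as [|k IHk]; simpl; [apply is_lim_seq_const | now apply is_lim_seq_mult'].
Qed.

Lemma is_lim_seq_sub_ratio q : is_lim_seq (fun n => INR (n - q) / INR (n + 1)) 1.
Proof.
  apply is_lim_seq_ext_loc with (u := fun n => 1 + - INR (q + 1) * / INR (n + 1)).
  - exists q. intros n Hn. rewrite minus_INR by lia. rewrite !plus_INR. simpl.
    field. pose proof (pos_INR n). lra.
  - replace (Finite 1) with (Finite (1 + - INR (q + 1) * 0)) by (f_equal; ring).
    apply is_lim_seq_plus'; [apply is_lim_seq_const|].
    apply (is_lim_seq_scal_l _ (- INR (q + 1)) 0), is_lim_seq_inv_succ.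
Qed.

Lemma is_lim_seq_ffact m : forall q,
  is_lim_seq (fun n => INR (binomial.falling_factorial (n - q) m) / INR (n + 1) ^ m) 1.
Proof.
  induction m as [|m IHm]; intros q.
  - apply is_lim_seq_ext with (u := fun _ => 1); [|apply is_lim_seq_const].
    intros n. rewrite binomial.ffactn0. simpl. field.
  - apply is_lim_seq_ext with
      (u := fun n => INR (n - q) / INR (n + 1)
                     * (INR (binomial.falling_factorial (n - S q) m) / INR (n + 1) ^ m)).
    + intros n. rewrite binomial.ffactnS. unfold ssrnat.muln.
      replace (Init.Nat.pred (n - q)) with (n - S q)%nat by lia. rewrite mult_INR. simpl.
      field. split; [apply pow_nonzero|]; rewrite plus_INR; simpl; pose proof (pos_INR n); lra.
    + replace (Finite 1) with (Finite (1 * 1)) by (f_equal; ring).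
      apply is_lim_seq_mult'; [apply is_lim_seq_sub_ratio | apply IHm].
Qed.

Lemma one_sub_ratio_pos m n : (m < n + 1)%nat -> 0 < 1 - INR m / INR (n + 1).
Proof.
  intros Hmn. assert (INR m < INR (n + 1)) by (apply lt_INR; lia).
  assert (0 < INR (n + 1)) by (apply lt_0_INR; lia).
  apply Rmult_lt_reg_r with (INR (n + 1)); auto. field_simplify; lra.
Qed.

Lemma is_lim_seq_compound m : (1 <= m)%nat ->
  is_lim_seq (fun n => (1 - INR m / INR (n + 1)) ^ (n + 1)) (exp (- INR m)).
Proof.
  intros Hm. set (y := fun n => - INR m * / INR (n + 1)).
  assert (Hy : is_lim_seq y 0).
  { replace (Finite 0) with (Finite (- INR m * 0)) by (f_equal; ring).
    apply (is_lim_seq_scal_l _ (- INR m) 0), is_lim_seq_inv_succ. }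
  assert (Hy0 : forall n, y n <> 0).
  { intros n. apply Rmult_integral_contrapositive. split.
    - apply Ropp_neq_0_compat, not_0_INR. lia.
    - apply Rinv_neq_0_compat, not_0_INR. lia. }
  assert (Hln : is_lim_seq (fun n => ln (1 + y n) / y n) 1).
  { apply (is_lim_comp_seq (fun t => ln (1 + t) / t) y 0 1); [apply is_lim_div_ln1p_0| |exact Hy].
    exists O. intros n _ H. apply (Hy0 n). now injection H. }
  apply is_lim_seq_ext_loc with (u := fun n => exp (- INR m * (ln (1 + y n) / y n))).
  - exists m. intros n Hn.
    pose proof (one_sub_ratio_pos m n ltac:(lia)) as Hpos.
    rewrite <- (exp_ln ((1 - INR m / INR (n + 1)) ^ (n + 1))) by now apply pow_lt.
    rewrite ln_pow by exact Hpos. f_equal. unfold y.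
    assert (INR m <> 0) by (apply not_0_INR; lia). assert (INR (n + 1) <> 0) by (apply not_0_INR; lia).
    replace (1 - INR m / INR (n + 1)) with (1 + - INR m * / INR (n + 1)) by (unfold Rdiv; ring).
    field. auto.
  - apply is_lim_seq_continuous; [apply derivable_continuous_pt, derivable_pt_exp|].
    replace (Finite (- INR m)) with (Finite (- INR m * 1)) by (f_equal; ring).
    now apply (is_lim_seq_scal_l _ (- INR m) 1).
Qed.

Lemma is_lim_seq_exp_neg m : (1 <= m)%nat ->
  is_lim_seq (fun n => (1 - INR m / INR (n + 1)) ^ (n - m - 1)) (exp (- INR m)).
Proof.
  intros Hm. set (r := fun n => 1 - INR m / INR (n + 1)).
  assert (Hr : is_lim_seq (fun n => r n ^ (m + 2)) 1).
  { rewrite <- (pow1 (m + 2)). apply is_lim_seq_pow_nat.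
    replace (Finite 1) with (Finite (1 - INR m * 0)) by (f_equal; ring).
    apply is_lim_seq_minus'; [apply is_lim_seq_const|].
    apply (is_lim_seq_scal_l _ (INR m) 0), is_lim_seq_inv_succ. }
  replace (Finite (exp (- INR m))) with (Finite (exp (- INR m) / 1)) by (f_equal; field).
  apply is_lim_seq_ext_loc with (u := fun n => r n ^ (n + 1) / r n ^ (m + 2));
    [|apply is_lim_seq_div'; [now apply is_lim_seq_compound | exact Hr | lra]].
  exists (m + 1)%nat. intros n Hn. fold (r n).
  assert (Hrn : r n <> 0) by (apply Rgt_not_eq, one_sub_ratio_pos; lia).
  replace (n + 1)%nat with (n - m - 1 + (m + 2))%nat by lia. rewrite pow_add.
  field. now apply pow_nonzero.
Qed.

Lemma factorial_fact n : ssrnat.factorial n = fact n.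
Proof.
  induction n as [|n IHn]; [reflexivity|]. rewrite ssrnat.factS, IHn. reflexivity.
Qed.

Lemma ffact_binomial n m : (1 <= n)%nat -> (1 <= m)%nat ->
  INR n * INR (binomial.binomial (n - 1) (m - 1)) * INR (fact (m - 1)) = INR (binomial.falling_factorial n m).
Proof.
  intros Hn Hm. destruct m as [|m]; [lia|]. rewrite Nat.sub_succ, Nat.sub_0_r.
  rewrite binomial.ffactnS, <- binomial.bin_ffact, factorial_fact. unfold ssrnat.muln.
  replace (Init.Nat.pred n) with (n - 1)%nat by lia. rewrite !mult_INR. ring.
Qed.

Lemma abel_1 k : abel 1 k = INR (k + 1) ^ (k - 1).
Proof.
  destruct k as [|k]; [reflexivity|]. cbn [abel Nat.sub]. rewrite Nat.sub_0_r, Nat.add_comm, INR_1. ring.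
Qed.

Lemma is_lim_seq_tight_term m : (1 <= m)%nat ->
  is_lim_seq (fun n => INR n * tight_term n m / abel 1 n) (borel_pmf m).
Proof.
  intros Hm. set (C := INR m ^ (m - 2) / INR (fact (m - 1))).
  apply is_lim_seq_ext_loc with
    (u := fun n => INR (binomial.falling_factorial (n - 0) m) / INR (n + 1) ^ m
                   * (1 - INR m / INR (n + 1)) ^ (n - m - 1) * C).
  - exists (m + 1)%nat. intros n Hn. unfold tight_term, C.
    rewrite !abel_1, Nat.sub_0_r, <- ffact_binomial by lia.
    replace (m - 1 + 1)%nat with m by lia. replace (m - 1 - 1)%nat with (m - 2)%nat by lia.
    replace (n - m + 1)%nat with (n + 1 - m)%nat by lia. rewrite (minus_INR (n + 1) m) by lia.
    replace (n - 1)%nat with (m + (n - m - 1))%nat by lia. rewrite pow_add.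
    assert (Hn1 : INR (n + 1) <> 0) by (apply not_0_INR; lia).
    replace (INR (n + 1) - INR m) with (INR (n + 1) * (1 - INR m / INR (n + 1))) by (field; auto).
    rewrite Rpow_mult_distr. replace (n - m - 1 + 1 - 1)%nat with (n - m - 1)%nat by lia.
    field. repeat split; try apply pow_nonzero; auto. apply INR_fact_neq_0.
  - replace (borel_pmf m) with (1 * exp (- INR m) * C).
    + apply is_lim_seq_mult'; [apply is_lim_seq_mult'|apply is_lim_seq_const].
      * apply is_lim_seq_ffact.
      * now apply is_lim_seq_exp_neg.
    + unfold borel_pmf, C. destruct m as [|[|m]]; [lia| simpl; lra|].
      replace (S (S m) - 1)%nat with (S m) by lia. replace (S (S m) - 2)%nat with m by lia.
      rewrite (fact_simpl (S m)), mult_INR. cbn [pow].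
      field. split; [apply INR_fact_neq_0 | apply not_0_INR; lia].
Qed.

Lemma is_lim_seq_fold_right_Rplus (u : nat -> nat -> R) (v : nat -> R) l :
  (forall m, In m l -> is_lim_seq (fun n => u n m) (v m)) ->
  is_lim_seq (fun n => fold_right Rplus 0 (map (u n) l)) (fold_right Rplus 0 (map v l)).
Proof.
  induction l as [|m l IHl]; intros H; simpl; [apply is_lim_seq_const|].
  apply is_lim_seq_plus'; [apply H; now left | apply IHl; intros; apply H; now right].
Qed.

Lemma fold_right_Rplus_map_mult c f (l : list nat) :
  fold_right Rplus 0 (map f l) * c = fold_right Rplus 0 (map (fun x => f x * c) l).
Proof. induction l as [|x l IHl]; simpl; [ring|]. rewrite <- IHl. ring. Qed.

Lemma is_lim_seq_head_count j : is_lim_seq (fun n => INR n * head_count n j / abel 1 n) (borel_cdf (j + 1)).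
Proof.
  apply is_lim_seq_ext with
    (u := fun n => fold_right Rplus 0 (map (fun m => INR n * tight_term n m / abel 1 n) (seq 1 (j + 1)))).
  - intros n. replace (INR n * head_count n j / abel 1 n) with (head_count n j * (INR n / abel 1 n))
      by (unfold Rdiv; ring).
    unfold head_count. rewrite fold_right_Rplus_map_mult. f_equal.
    apply map_ext. intros m. unfold Rdiv. ring.
  - apply is_lim_seq_fold_right_Rplus. intros m Hm. apply in_seq in Hm. apply is_lim_seq_tight_term. lia.
Qed.

Lemma borel_pmf_pos m : (1 <= m)%nat -> 0 < borel_pmf m.
Proof.
  intros Hm. unfold borel_pmf. apply Rdiv_lt_0_compat; [apply Rmult_lt_0_compat; [apply exp_pos|]|].
  - apply pow_lt, lt_0_INR. lia.
  - apply lt_0_INR, lt_O_fact.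
Qed.

Lemma fold_right_Rplus_map_nonneg f (l : list nat) :
  (forall x, In x l -> 0 <= f x) -> 0 <= fold_right Rplus 0 (map f l).
Proof.
  induction l as [|x l IHl]; intros H; simpl; [lra|].
  pose proof (H x (or_introl eq_refl)). enough (0 <= fold_right Rplus 0 (map f l)) by lra.
  apply IHl. intros; apply H; now right.
Qed.

Lemma borel_cdf_pos k : 0 < borel_cdf (S k).
Proof.
  unfold borel_cdf. cbn [seq map fold_right]. pose proof (borel_pmf_pos 1 ltac:(lia)).
  enough (0 <= fold_right Rplus 0 (map borel_pmf (seq 2 k))) by lra.
  apply fold_right_Rplus_map_nonneg. intros m Hm. apply in_seq in Hm. apply Rlt_le, borel_pmf_pos. lia.
Qed.

Lemma prob_first_asymptotic j :
  is_lim_seq (fun n => prob_first n (n - j) / (borel_cdf (j + 1) / INR n)) 1.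
Proof.
  pose proof (borel_cdf_pos j) as Hc. rewrite <- Nat.add_1_r in Hc.
  apply is_lim_seq_ext_loc with (u := fun n => (INR n * head_count n j / abel 1 n) / borel_cdf (j + 1)).
  - exists (j + 1)%nat. intros n Hn. rewrite prob_first_head_count by lia.
    assert (0 < abel 1 n) by (rewrite abel_1; apply pow_lt, lt_0_INR; lia).
    assert (INR n <> 0) by (apply not_0_INR; lia).
    field. repeat split; lra.
  - replace (Finite 1) with (Finite (borel_cdf (j + 1) / borel_cdf (j + 1))) by (f_equal; field; lra).
    apply is_lim_seq_div'; [apply is_lim_seq_head_count | apply is_lim_seq_const | lra].
Qed.

Theorem corollary2 :
  (forall j : nat,
     Un_cv (fun n : nat => prob_first n (n - j) / (borel_cdf (j + 1) / INR n)) 1) /\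
  Un_cv (fun n : nat => prob_first n n / (1 / (exp 1 * INR n))) 1.
Proof.
  split; intros; apply is_lim_seq_Reals; [apply prob_first_asymptotic|].
  apply is_lim_seq_ext_loc with (u := fun n => prob_first n (n - 0) / (borel_cdf (0 + 1) / INR n));
    [|apply prob_first_asymptotic].
  exists 1%nat. intros n Hn. rewrite Nat.sub_0_r. f_equal.
  assert (INR n <> 0) by (apply not_0_INR; lia). pose proof (exp_pos 1).
  unfold borel_cdf, borel_pmf. simpl. rewrite exp_Ropp. field. lra.
Qed.
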